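(* Let $\mathfrak{q}$ be an $n\times n$ quantum parameter matrix over a field $k$ and $V$ a $k$-vector space with basis $v_1,\dots,v_n$. There exists a surjective group homomorphism $\pi:\mathrm{Aut}_{\mathrm{gr}}(S_{\mathfrak{q}}(V))\to\mathrm{Stab}(\mathfrak{q})$ with $\ker\pi=\prod_{B\in\mathcal{B}_{\mathfrak{q}}}\mathrm{GL}(V_B)$ and $\pi\circ\iota=\mathrm{Id}$.
   Context: An $n\times n$ quantum parameter matrix is a matrix $\mathfrak{q}=(q_{ij})$ over $k$ with $q_{ii}=1$ and $q_{ij}q_{ji}=1$ for all $i,j$. $S_{\mathfrak{q}}(V)$ is the $k$-algebra generated by $v_1,\dots,v_n$ with relations $v_jv_i=q_{ij}v_iv_j$, graded by $\deg v_i=1$; $\mathrm{Aut}_{\mathrm{gr}}(S_{\mathfrak{q}}(V))$ is the group of degree-preserving algebra automorphisms, viewed as a subgroup of $\mathrm{GL}(V)$ by restriction. $\mathcal{B}_{\mathfrak{q}}$ is the partition of $[n]$ with $i\sim j$ iff rows $i,j$ of $\mathfrak{q}$ are identical; its classes are the blocks. $V_B=\mathrm{span}\{v_i:i\in B\}$, and $\mathrm{GL}(V_B)$ is identified with the subgroup of $\mathrm{GL}(V)$ acting on $V_B$ and fixing $v_i$ for $i\notin B$. $\mathfrak{q}_{BC}=(q_{ij})_{i\in B,j\in C}$. With $r=|\mathcal{B}_{\mathfrak{q}}|$, $\mathfrak{S}_r$ permutes the blocks, and $\mathrm{Stab}(\mathfrak{q})=\{\sigma\in\mathfrak{S}_r:|\sigma(B)|=|B|\text{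 and }\mathfrak{q}_{BC}=\mathfrak{q}_{\sigma(B)\sigma(C)}\text{ for all blocks }B,C\}$. The map $\iota:\mathrm{Stab}(\mathfrak{q})\to\mathrm{Aut}_{\mathrm{gr}}(S_{\mathfrak{q}}(V))$ sends $\sigma$ to the unique invertible linear map on $V$ that permutes the basis vectors $v_i$, sends $V_B$ onto $V_{\sigma(B)}$ for each block $B$, and preserves the order $v_1<\dots<v_n$ within each block (this is an injective group homomorphism into $\mathrm{Aut}_{\mathrm{gr}}(S_{\mathfrak{q}}(V))$). *)

From HB Require Import structures.
From mathcomp Require Import all_boot all_order all_algebra all_fingroup.
Set Implicit Arguments. Unset Strict Implicit. Unset Printing Implicit Defensive.
Import GRing.Theory.
Local Open Scope ring_scope.

Section QuantumAffine.
Variables (k : fieldType) (n : nat) (q : 'M[k]_n).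

Definition qparam : Prop := (forall i, q i i = 1) /\ (forall i j, q i j * q j i = 1).

Definition qblock (i : 'I_n) : {set 'I_n} := [set j | [forall l, q i l == q j l]].

Definition qBlocks : {set {set 'I_n}} := [set qblock i | i : 'I_n].

(* The submatrix q_BC, rows/columns listed in increasing order. *)
Definition qsub (B C : {set 'I_n}) : seq (seq k) :=
  [seq [seq q i j | j <- enum C] | i <- enum B].

(* Stab(q), as a set of permutations of the blocks (permutations of
   {set 'I_n} supported on qBlocks, i.e. the symmetric group on the r blocks). *)
Definition qStab (s : {perm {set 'I_n}}) : bool :=
  [&& perm_on qBlocks s,
      [forall B in qBlocks, #|s B| == #|B|] &
      [forall B in qBlocks, forall C in qBlocks, qsub B C == qsub (s B) (s C)]].

(* The tensor square V (x) V is identified with n x n matrices: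
   v_a (x) v_b <-> delta_mx a b; g (x) g acts by X |-> g X g^T, where the
   matrix g acts on column coordinates: g v_b = sum_a g a b v_a. *)
Definition qrel (i j : 'I_n) : 'M[k]_n := delta_mx j i - q i j *: delta_mx i j.

(* g in GL(V) is (the restriction of) a degree-preserving automorphism of
   S_q(V) = T(V)/(R), R = span{v_j (x) v_i - q_ij v_i (x) v_j}, iff it is
   invertible and (g (x) g)(R) is contained in R. *)
Definition qAut (g : 'M[k]_n) : Prop :=
  g \in unitmx /\
  forall i j, exists c : 'M[k]_n,
    g *m qrel i j *m g^T = \sum_(a < n) \sum_(b < n) c a b *: qrel a b.

(* iota(sigma): sends v_b to the vector of sigma(B) in the same position
   (in increasing order) as v_b in its block B. *)
Definition qiota_fun (s : {perm {set 'I_n}}) (b : 'I_n) : 'I_n :=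
  nth b (enum (s (qblock b))) (index b (enum (qblock b))).

Definition qiota (s : {perm {set 'I_n}}) : 'M[k]_n :=
  \matrix_(a, b) (a == qiota_fun s b)%:R.

(* GL(V_B) as a subgroup of GL(V): invertible, fixes v_b for b notin B,
   maps V_B into V_B. *)
Definition inGLblock (B : {set 'I_n}) (g : 'M[k]_n) : Prop :=
  g \in unitmx /\
  (forall a b, b \notin B -> g a b = (a == b)%:R) /\
  (forall a b, b \in B -> a \notin B -> g a b = 0).

Definition inProdGLblocks (g : 'M[k]_n) : Prop :=
  exists h : {set 'I_n} -> 'M[k]_n,
    (forall B, B \in qBlocks -> inGLblock B (h B)) /\
    g = foldr (fun B acc => h B *m acc) 1%:M (enum qBlocks).

End QuantumAffine.

From HB Require Import structures.
From mathcomp Require Import all_boot all_order all_algebra all_fingroup.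
From mathcomp Require Import ring.
Set Implicit Arguments. Unset Strict Implicit. Unset Printing Implicit Defensive.
Import GRing.Theory.
Local Open Scope ring_scope.

(** An automorphism [g] maps each relation [v_j v_i - q_ij v_i v_j] into the span of
    the relations.  Comparing coefficients gives [q c d = q i j] whenever [g c i] and
    [g d j] are nonzero, since otherwise two distinct rows of [g] would be proportional.
    Hence [g] sends the coordinates of a block [B] into a single block, of the same size
    (compare with a permutation in the support of [det g]) and with the same entries of
    [q]: this block permutation is [pi g], an element of [Stab q], multiplicative because
    supports compose.  If [pi g = 1] then [g] is block diagonal and is the product of the
    factors [1 + (g - 1) D_B], with [D_B] the coordinate projection onto [V_B]; these
    multiply like [1 + (g - 1) (D_B + D_C)] because [D_B (g - 1) D_C = 0] for [B <> C].
    Finally [iota s] is a permutation matrix preserving [q], so it permutes the relations. *)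

Section MatrixFacts.
Variables (k : fieldType) (n : nat).
Implicit Types (g A X D E : 'M[k]_n) (S T : {set 'I_n}).

Lemma sum_delta_mx_scale (F : 'I_n -> 'I_n -> 'M[k]_n) x y :
  \sum_a \sum_b delta_mx x y a b *: F a b = F x y.
Proof.
rewrite (big_only1 x) // => [|a ax _]; last first.
  by apply: big1 => b _; rewrite mxE (negbTE ax) scale0r.
rewrite (big_only1 y) // => [|b yb _]; first by rewrite mxE !eqxx scale1r.
by rewrite mxE eqxx (negbTE yb) scale0r.
Qed.

Lemma sum_scale_deltaE (F : 'I_n -> 'I_n -> k) x y :
  (\sum_a \sum_b F a b *: delta_mx a b) x y = F x y.
Proof.
have -> : F x y = (\matrix_(a, b) F a b) x y by rewrite mxE.
rewrite (matrix_sum_delta (\matrix_(a, b) F a b)); congr (_ x y).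
by symmetry; under eq_bigr => i _ do under eq_bigr => j _ do rewrite mxE.
Qed.

Lemma mul_delta_mxE A (B : 'M[k]_n) a b x y :
  (A *m delta_mx a b *m B) x y = A x a * B b y.
Proof.
rewrite mxE (big_only1 b) // => [|m mb _]; last first.
  by rewrite mxE big1 ?mul0r // => l _; rewrite mxE (negbTE mb) andbF mulr0.
rewrite mxE (big_only1 a) // => [|l la _]; first by rewrite mxE !eqxx mulr1.
by rewrite mxE (negbTE la) mulr0.
Qed.

Lemma unitmx_perm_nz g : g \in unitmx -> exists s : 'S_n, forall i, g i (s i) != 0.
Proof.
rewrite unitmxE unitfE => det_nz.
have [/existsP[s /forallP gs]|/existsPn no_s] :=
  boolP [exists s : 'S_n, [forall i, g i (s i) != 0]]; first by exists s.
case/eqP: det_nz; apply: big1 => s _.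
have /existsP[i /negPn/eqP gi0] : [exists i, ~~ (g i (s i) != 0)].
  by rewrite -negb_forall no_s.
by rewrite (bigD1 i) //= gi0 mul0r mulr0.
Qed.

Lemma unitmx_col_nz g j : g \in unitmx -> exists i, g i j != 0.
Proof.
by case/unitmx_perm_nz=> s gs; exists (s^-1 j)%g; have := gs (s^-1 j)%g; rewrite permKV.
Qed.

Lemma unitmx_row_nz g i : g \in unitmx -> exists j, g i j != 0.
Proof. by case/unitmx_perm_nz=> s gs; exists (s i). Qed.

Lemma unitmx_row_scale_neq g c d l :
  g \in unitmx -> c != d -> row d g != l *: row c g.
Proof.
move=> gU cd; apply/eqP => rowd.
have : 'e_d - l *: 'e_c = 0 :> 'rV[k]_n.
  by rewrite -(mulmxK gU ('e_d - _)) mulmxBl -scalemxAl -!rowE rowd subrr mul0mx.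
by move/rowP/(_ d); rewrite !mxE !eqxx eq_sym (negbTE cd) mulr0 subr0 => /eqP; rewrite oner_eq0.
Qed.

Definition fun_mx (f : 'I_n -> 'I_n) : 'M[k]_n := \matrix_(a, b) (a == f b)%:R.

Lemma unitmx_fun_mx f : injective f -> fun_mx f \in unitmx.
Proof.
move=> f_inj; have -> : fun_mx f = (perm_mx (perm f_inj))^T.
  by apply/matrixP => a b; rewrite !mxE permE eq_sym.
by rewrite unitmx_tr unitmx_perm.
Qed.

Lemma fun_mx_delta f i j :
  fun_mx f *m delta_mx i j *m (fun_mx f)^T = delta_mx (f i) (f j).
Proof.
apply/matrixP => x y; rewrite mul_delta_mxE !mxE.
by case: (x == f i); case: (y == f j); rewrite ?mulr1 ?mulr0.
Qed.

Definition diag_set S : 'M[k]_n := diag_mx (\row_i (i \in S)%:R).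

Lemma mulmx_diag_setE A S a b : (A *m diag_set S) a b = A a b * (b \in S)%:R.
Proof. by rewrite mul_mx_diag !mxE. Qed.

Lemma diag_set_mulmxE S A a b : (diag_set S *m A) a b = (a \in S)%:R * A a b.
Proof. by rewrite mul_diag_mx !mxE. Qed.

Lemma diag_set0 : diag_set set0 = 0.
Proof.
by rewrite /diag_set -(raddf0 (@diag_mx k n)); congr diag_mx; apply/rowP => i; rewrite !mxE inE.
Qed.

Lemma diag_setT : diag_set setT = 1%:M.
Proof. by rewrite -diag_const_mx; congr diag_mx; apply/rowP => i; rewrite !mxE inE. Qed.

Lemma diag_setU S T : [disjoint S & T] -> diag_set S + diag_set T = diag_set (S :|: T).
Proof.
move=> dST; rewrite /diag_set -raddfD /=; congr diag_mx; apply/rowP => i; rewrite !mxE inE.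
by case: (boolP (i \in S)) => iS; rewrite ?(disjointFr dST iS) ?add0r ?addr0.
Qed.

Lemma diag_setC S : diag_set S + diag_set (~: S) = 1%:M.
Proof. by rewrite diag_setU ?setUCr ?diag_setT // disjoints_subset setCK. Qed.

Lemma mul_one_add_mx X D E : D *m X *m E = 0 ->
  (1%:M + X *m D) *m (1%:M + X *m E) = 1%:M + X *m (D + E).
Proof.
move=> DXE; have XDXE : X *m D *m (X *m E) = 0 by rewrite -mulmxA (mulmxA D) DXE mulmx0.
by rewrite mulmxDl !mulmxDr !mul1mx mulmx1 XDXE addr0 addrAC addrA.
Qed.

End MatrixFacts.

Arguments fun_mx {k n} f.
Arguments diag_set {k n} S.

Lemma map_const_in (T : eqType) U (f : T -> U) (s : seq T) c :
  {in s, forall x, f x = c} -> map f s = nseq (size s) c.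
Proof.
elim: s => //= x s IH fc; rewrite fc ?mem_head // IH // => y ys.
by rewrite fc // inE ys orbT.
Qed.

Section Blocks.
Variables (k : fieldType) (n : nat) (q : 'M[k]_n).
Hypothesis qP : qparam q.
Implicit Types (g h : 'M[k]_n) (s t : {perm {set 'I_n}}) (B C : {set 'I_n}).

Lemma qdiag i : q i i = 1. Proof. by case: qP. Qed.

Lemma qblockP i j : reflect (forall l, q i l = q j l) (j \in qblock q i).
Proof. by rewrite inE; apply: (iffP forallP) => H l; [apply/eqP/H | rewrite H]. Qed.

Lemma qblock_refl i : i \in qblock q i.
Proof. exact/qblockP. Qed.

Lemma eq_qblock i j : j \in qblock q i -> qblock q j = qblock q i.
Proof.
move/qblockP=> qij; apply/setP => x.
by apply/qblockP/qblockP => qx l; [rewrite qij qx | rewrite -qij qx].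
Qed.

Lemma qblock_col i j l : j \in qblock q i -> q l i = q l j.
Proof.
case: qP => _ qV /qblockP qij.
have qjl : q j l != 0.
  by apply/eqP => qjl0; move: (qV j l); rewrite qjl0 mul0r => /eqP; rewrite eq_sym oner_eq0.
by apply: (mulfI qjl); rewrite -{1}qij !qV.
Qed.

Lemma qBlocksP B : reflect (exists i, B = qblock q i) (B \in qBlocks q).
Proof. by apply: (iffP imsetP) => [[i _ ->]|[i ->]]; exists i. Qed.

Lemma qblock_qBlocks i : qblock q i \in qBlocks q.
Proof. by apply/qBlocksP; exists i. Qed.

Lemma qBlocksE B b : B \in qBlocks q -> b \in B -> B = qblock q b.
Proof. by case/qBlocksP=> i -> /eq_qblock ->. Qed.

Lemma qBlocks_meet B C x : B \in qBlocks q -> C \in qBlocks q -> x \in B -> x \in C -> B = C.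
Proof. by move=> hB hC xB xC; rewrite (qBlocksE hB xB) (qBlocksE hC xC). Qed.

Lemma qsub_qblock i j :
  qsub q (qblock q i) (qblock q j) = nseq #|qblock q i| (nseq #|qblock q j| (q i j)).
Proof.
rewrite /qsub !cardE.
apply: map_const_in => a; rewrite mem_enum => /qblockP qia.
apply: map_const_in => b; rewrite mem_enum => /(qblock_col a) <-.
by rewrite qia.
Qed.

Lemma qsub_qblock_inj i j i' j' :
  qsub q (qblock q i) (qblock q j) = qsub q (qblock q i') (qblock q j') -> q i j = q i' j'.
Proof.
have pos l : (0 < #|qblock q l|)%N by apply/card_gt0P; exists l; exact: qblock_refl.
rewrite !qsub_qblock => /(congr1 (fun L => nth 0 (nth [::] L 0) 0)).
by rewrite !nth_nseq !pos !nth_nseq !pos.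
Qed.

Definition block_supported (g : 'M[k]_n) (s : {perm {set 'I_n}}) : bool :=
  perm_on (qBlocks q) s && [forall a, forall b, (g a b != 0) ==> (a \in s (qblock q b))].

Lemma block_supportedP g s :
  reflect (perm_on (qBlocks q) s /\ forall a b, g a b != 0 -> a \in s (qblock q b))
          (block_supported g s).
Proof.
apply: (iffP andP) => -[sB gs]; split=> //.
  by move=> a b; move/forallP/(_ a)/forallP/(_ b)/implyP: gs.
by apply/forallP => a; apply/forallP => b; apply/implyP/gs.
Qed.

Lemma block_supported1P g :
  reflect (forall a b, g a b != 0 -> a \in qblock q b) (block_supported g 1).
Proof.
apply: (iffP (block_supportedP g 1)) => [[_ g1] a b|g1].
  by move/g1; rewrite perm1.
by split=> [|a b /g1]; rewrite ?perm1 ?perm_on1.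
Qed.

Lemma block_supported_mul g h s t :
  block_supported g s -> block_supported h t -> block_supported (g *m h) (t * s).
Proof.
move=> /block_supportedP[sB gs] /block_supportedP[tB ht].
apply/block_supportedP; split=> [|a b]; first exact: perm_onM.
apply: contraR => a_out; rewrite mxE; apply/eqP/big1 => m _; apply/eqP.
rewrite mulf_eq0; apply: contraR a_out => /norP[/gs a_in /ht m_in].
have tB_block : t (qblock q b) \in qBlocks q by rewrite perm_closed ?qblock_qBlocks.
by rewrite permM (qBlocksE tB_block m_in).
Qed.

Lemma block_supported_uniq g s t :
  g \in unitmx -> block_supported g s -> block_supported g t -> s = t.
Proof.
move=> gU /block_supportedP[sB gs] /block_supportedP[tB gt]; apply/permP => B.
have [/qBlocksP[b ->]|B_out] := boolP (B \in qBlocks q); last first.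
  by rewrite (out_perm sB B_out) (out_perm tB B_out).
have [a ab] := unitmx_col_nz b gU.
by apply: qBlocks_meet (gs _ _ ab) (gt _ _ ab); rewrite perm_closed ?qblock_qBlocks.
Qed.

Definition qpi (g : 'M[k]_n) : {perm {set 'I_n}} := odflt 1%g [pick s | block_supported g s].

Lemma qpi_eq g s : g \in unitmx -> block_supported g s -> qpi g = s.
Proof.
move=> gU gs; rewrite /qpi; case: pickP => [t gt|/(_ s)] /=; last by rewrite gs.
exact: block_supported_uniq gt gs.
Qed.

Lemma block_supported_1mx : block_supported 1%:M 1.
Proof.
apply/block_supported1P => a b; rewrite mxE.
by case: (a =P b) => [->|]; rewrite ?qblock_refl //= mulr0n eqxx.
Qed.

Lemma inGLblock_supported B h : B \in qBlocks q -> inGLblock B h -> block_supported h 1.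
Proof.
move=> hB [_ [h_out h_in]]; apply/block_supported1P => a b.
have [bB|bB] := boolP (b \in B); last first.
  by rewrite h_out //; case: (a =P b) => [->|]; rewrite ?qblock_refl //= mulr0n eqxx.
have [aB|aB] := boolP (a \in B); first by rewrite -(qBlocksE hB bB).
by rewrite h_in // eqxx.
Qed.

Lemma inProdGLblocks_supported1 g : inProdGLblocks q g -> block_supported g 1.
Proof.
case=> h [hGL ->]; have : {subset enum (qBlocks q) <= qBlocks q} by move=> B; rewrite mem_enum.
elim: (enum _) => [_|B l IH lB] /=; first exact: block_supported_1mx.
have hB : B \in qBlocks q by apply: lB; exact: mem_head.
rewrite -(mulg1 1%g); apply: block_supported_mul; first exact: inGLblock_supported (hGL B hB).
by apply: IH => C Cl; apply: lB; rewrite inE Cl orbT.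
Qed.

Section BlockDiagonal.
Variable X : 'M[k]_n.
Hypothesis X_block : forall a b, X a b != 0 -> a \in qblock q b.

Lemma diag_set_block_cross B C :
  B \in qBlocks q -> [disjoint B & C] -> diag_set B *m X *m diag_set C = 0.
Proof.
move=> hB dBC; apply/matrixP => a b; rewrite mulmx_diag_setE diag_set_mulmxE !mxE.
have [aB|_] := boolP (a \in B); last by rewrite /= mulr0n !mul0r.
have [bC|_] := boolP (b \in C); last by rewrite /= mulr0n mulr0.
have [->|/X_block ab] := eqVneq (X a b) 0; first by rewrite mulr0 mul0r.
have bB : b \in B by rewrite (qBlocksE hB aB) (eq_qblock ab) qblock_refl.
by rewrite (disjointFr dBC bB) in bC.
Qed.

Lemma prod_block_factors l : uniq l -> {subset l <= qBlocks q} ->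
  foldr (fun B M => (1%:M + X *m diag_set B) *m M) 1%:M l =
  1%:M + X *m diag_set (\bigcup_(B <- l) B).
Proof.
elim: l => [|B l IH] /=; first by rewrite big_nil diag_set0 mulmx0 addr0.
move=> /andP[Bl ul] lB; have hB : B \in qBlocks q by apply: lB; exact: mem_head.
rewrite IH //; last by move=> C Cl; apply: lB; rewrite inE Cl orbT.
have dBl : [disjoint B & \bigcup_(C <- l) C].
  rewrite disjoints_subset; apply/subsetP => x xB; rewrite !inE bigcup_seq.
  apply/bigcupP => -[C Cl xC]; have hC : C \in qBlocks q by apply: lB; rewrite inE Cl orbT.
  by move: Bl; rewrite (qBlocks_meet hB hC xB xC) Cl.
by rewrite mul_one_add_mx ?diag_set_block_cross // diag_setU // big_cons.
Qed.

Lemma block_factor_GL B : B \in qBlocks q -> 1%:M + X \in unitmx ->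
  inGLblock B (1%:M + X *m diag_set B).
Proof.
move=> hB XU; have factorE a b :
    (1%:M + X *m diag_set B) a b = (a == b)%:R + X a b * (b \in B)%:R.
  by rewrite mxE mulmx_diag_setE mxE.
split; [|split] => [|a b bB|a b bB aB]; rewrite ?factorE.
- have dBC : [disjoint B & ~: B] by rewrite disjoints_subset setCK.
  have cofactor : (1%:M + X *m diag_set B) *m (1%:M + X *m diag_set (~: B)) = 1%:M + X.
    by rewrite mul_one_add_mx ?diag_set_block_cross // diag_setC mulmx1.
  by move: XU; rewrite -cofactor unitmx_mul => /andP[].
- by rewrite (negbTE bB) mulr0 addr0.
- have [Xab0|/X_block ab] := eqVneq (X a b) 0; last by move: aB; rewrite (qBlocksE hB bB) ab.
  by rewrite Xab0 mul0r addr0; case: eqP aB => [->|]; rewrite ?bB.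
Qed.

End BlockDiagonal.

Lemma block_supported1_inProdGLblocks g : g \in unitmx -> block_supported g 1 -> inProdGLblocks q g.
Proof.
move=> gU /block_supported1P g1.
have gX_block a b : (g - 1%:M) a b != 0 -> a \in qblock q b.
  have [-> _|ab] := eqVneq a b; first exact: qblock_refl.
  by rewrite !mxE (negbTE ab) subr0; exact: g1.
have cover_blocks : \bigcup_(B <- enum (qBlocks q)) B = setT.
  apply/setP => x; rewrite inE bigcup_seq; apply/bigcupP.
  by exists (qblock q x); rewrite ?mem_enum ?qblock_qBlocks ?qblock_refl.
exists (fun B => 1%:M + (g - 1%:M) *m diag_set B); split.
  by move=> B hB; apply: block_factor_GL; rewrite // addrC subrK.
rewrite prod_block_factors ?enum_uniq //; last by move=> B; rewrite mem_enum.
by rewrite cover_blocks diag_setT mulmx1 addrC subrK.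
Qed.

Lemma qStabP s :
  reflect [/\ perm_on (qBlocks q) s, {in qBlocks q, forall B, #|s B| = #|B|}
            & {in qBlocks q &, forall B C, qsub q B C = qsub q (s B) (s C)}]
          (qStab q s).
Proof.
apply: (iffP and3P) => -[sB cardB qsubB]; split=> //.
- by move=> B hB; apply/eqP/(forall_inP cardB).
- by move=> B C hB hC; apply/eqP/(forall_inP (forall_inP qsubB B hB)).
- by apply/forall_inP => B hB; apply/eqP/cardB.
- by apply/forall_inP => B hB; apply/forall_inP => C hC; apply/eqP/qsubB.
Qed.

Section Iota.
Variable s : {perm {set 'I_n}}.
Hypothesis Ss : qStab q s.

Local Notation tau := (qiota_fun q s).

Lemma qiota_fun_mem b : tau b \in s (qblock q b).
Proof.
case/qStabP: Ss => _ cardB _; rewrite /qiota_fun -mem_enum; apply: mem_nth.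
by rewrite -cardE cardB ?qblock_qBlocks // cardE index_mem mem_enum qblock_refl.
Qed.

Lemma qiota_fun_block b : s (qblock q b) = qblock q (tau b).
Proof.
case/qStabP: Ss => sB _ _.
by apply: qBlocksE (qiota_fun_mem b); rewrite perm_closed ?qblock_qBlocks.
Qed.

Lemma qiota_fun_inj : injective tau.
Proof.
move=> b b' tau_bb'; case/qStabP: Ss => _ cardB _.
have eBb' : qblock q b = qblock q b'.
  by apply: (@perm_inj _ s); rewrite !qiota_fun_block tau_bb'.
move: tau_bb'; rewrite /qiota_fun eBb'.
have b_in : b \in enum (qblock q b') by rewrite mem_enum -eBb' qblock_refl.
have b'_in : b' \in enum (qblock q b') by rewrite mem_enum qblock_refl.
have size_s : size (enum (s (qblock q b'))) = size (enum (qblock q b')).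
  by rewrite -!cardE cardB ?qblock_qBlocks.
have ib : (index b (enum (qblock q b')) < size (enum (s (qblock q b'))))%N.
  by rewrite size_s index_mem.
have ib' : (index b' (enum (qblock q b')) < size (enum (s (qblock q b'))))%N.
  by rewrite size_s index_mem.
rewrite (set_nth_default b' b ib) => /eqP; rewrite nth_uniq ?enum_uniq // => /eqP.
exact: index_inj.
Qed.

Lemma qiota_fun_q i j : q (tau i) (tau j) = q i j.
Proof.
case/qStabP: Ss => _ _ qsubB; apply/esym/qsub_qblock_inj.
by rewrite -!qiota_fun_block qsubB ?qblock_qBlocks.
Qed.

Lemma qiota_qAut : qAut q (qiota q s).
Proof.
have -> : qiota q s = fun_mx tau by [].
split=> [|i j]; first exact/unitmx_fun_mx/qiota_fun_inj.
exists (delta_mx (tau i) (tau j)); rewrite sum_delta_mx_scale /qrel.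
by rewrite mulmxBr mulmxBl -scalemxAr -scalemxAl !fun_mx_delta qiota_fun_q.
Qed.

Lemma qiota_supported : block_supported (qiota q s) s.
Proof.
case/qStabP: Ss => sB _ _; apply/block_supportedP; split=> // a b; rewrite mxE.
by case: (a =P tau b) => [->|] _; [exact: qiota_fun_mem | rewrite /= mulr0n eqxx].
Qed.

Lemma qpi_qiota : qpi (qiota q s) = s.
Proof. exact: qpi_eq (proj1 qiota_qAut) qiota_supported. Qed.

End Iota.

Lemma qrel_conjE g i j x y :
  (g *m qrel q i j *m g^T) x y = g x j * g y i - q i j * (g x i * g y j).
Proof.
have conj_delta a b : g *m delta_mx a b *m g^T = \matrix_(u, v) (g u a * g v b).
  by apply/matrixP => u v; rewrite mul_delta_mxE !mxE.
by rewrite /qrel mulmxBr mulmxBl -scalemxAr -scalemxAl !conj_delta !mxE.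
Qed.

Lemma qrel_spanE (c : 'M[k]_n) x y :
  (\sum_a \sum_b c a b *: qrel q a b) x y = c y x - c x y * q x y.
Proof.
have -> : \sum_a \sum_b c a b *: qrel q a b =
    \sum_b \sum_a c a b *: delta_mx b a - \sum_a \sum_b (c a b * q a b) *: delta_mx a b.
  rewrite [X in _ = X - _]exchange_big -sumrB; apply: eq_bigr => a _.
  by rewrite -sumrB; apply: eq_bigr => b _; rewrite /qrel scalerBr scalerA.
by rewrite !mxE !sum_scale_deltaE.
Qed.

Section QAut.
Variable g : 'M[k]_n.
Hypothesis gA : qAut q g.
Let gU : g \in unitmx := proj1 gA.

Lemma qAut_diag x i j : g x i * g x j * (1 - q i j) = 0.
Proof.
have [c /(congr1 (fun M : 'M[k]_n => M x x))] := proj2 gA i j.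
by rewrite qrel_conjE qrel_spanE qdiag mulr1 subrr => conj0; rewrite -conj0; ring.
Qed.

(* The (x, y) entry plus [q x y] times the (y, x) entry of a combination of relations vanishes. *)
Lemma qAut_sym x y i j :
  g x j * g y i * (1 - q x y * q i j) + g x i * g y j * (q x y - q i j) = 0.
Proof.
have [c conj_c] := proj2 gA i j; case: qP => _ qV.
have := congr1 (fun M : 'M[k]_n => M x y + q x y * M y x) conj_c.
rewrite /= !qrel_conjE !qrel_spanE.
have -> : c y x - c x y * q x y + q x y * (c x y - c y x * q y x) =
          c y x * (1 - q x y * q y x) by ring.
by rewrite qV subrr mulr0 => <-; ring.
Qed.

Lemma qAut_row_q1 c i j : g c i != 0 -> g c j != 0 -> q i j = 1.
Proof.
move=> ci cj; apply/esym/eqP; move/eqP: (qAut_diag c i j).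
by rewrite !mulf_eq0 (negbTE ci) (negbTE cj) subr_eq0.
Qed.

Lemma qAut_rows_proportional c d i j : g c i != 0 -> g d j != 0 -> q c d != q i j ->
  row d g = (g d i / g c i) *: row c g.
Proof.
move=> ci dj ne.
have /andP[cj di] : (g c j != 0) && (g d i != 0).
  rewrite -negb_or -mulf_eq0; apply: contra ne => /eqP cjdi; move/eqP: (qAut_sym c d i j).
  by rewrite cjdi mul0r add0r !mulf_eq0 (negbTE ci) (negbTE dj) subr_eq0.
have qij : q i j = 1 := qAut_row_q1 ci cj.
have qcd : 1 - q c d != 0 by rewrite subr_eq0 eq_sym -qij.
suff prop m : g d m * g c i = g d i * g c m.
  by apply/rowP => m; rewrite !mxE -(mulfK ci (g d m)) prop mulrAC.
have [cm0|cm] := eqVneq (g c m) 0.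
  rewrite cm0 mulr0; apply/eqP; rewrite mulf_eq0 (negbTE ci) orbF; apply: contraR ne => dm.
  move/eqP: (qAut_sym c d i m); rewrite cm0 !mul0r add0r !mulf_eq0 (negbTE ci) (negbTE dm).
  by rewrite /= subr_eq0 => /eqP ->; rewrite (qAut_row_q1 di dm) qij.
have qim : q i m = 1 := qAut_row_q1 ci cm.
have := qAut_sym c d i m; rewrite qim mulr1 => sym0.
have : (g d m * g c i - g d i * g c m) * (1 - q c d) = 0 by rewrite -oppr0 -sym0; ring.
by move/eqP; rewrite mulf_eq0 (negbTE qcd) orbF subr_eq0 => /eqP.
Qed.

Lemma qAut_supp_q c d i j : g c i != 0 -> g d j != 0 -> q c d = q i j.
Proof.
move=> ci dj; apply/eqP/negPn/negP => ne.
have [ecd|cd] := eqVneq c d.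
  by subst d; move: ne; rewrite qdiag (qAut_row_q1 ci dj) eqxx.
move/eqP: (unitmx_row_scale_neq (g d i / g c i) gU cd); apply.
exact: qAut_rows_proportional ci dj ne.
Qed.

Lemma qAut_row_block a a' b b' :
  g a b != 0 -> g a' b' != 0 -> b' \in qblock q b -> a' \in qblock q a.
Proof.
move=> ab ab' /qblockP bb'; apply/qblockP => l; have [j lj] := unitmx_row_nz l gU.
by rewrite (qAut_supp_q ab lj) (qAut_supp_q ab' lj) bb'.
Qed.

Lemma qAut_col_block a a' b b' :
  g a b != 0 -> g a' b' != 0 -> a' \in qblock q a -> b' \in qblock q b.
Proof.
move=> ab ab' /qblockP aa'; apply/qblockP => l; have [d dl] := unitmx_col_nz l gU.
by rewrite -(qAut_supp_q ab dl) -(qAut_supp_q ab' dl) aa'.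
Qed.

Definition block_image B : {set 'I_n} :=
  if B \in qBlocks q then
    [set c | [exists a, [exists b in B, (g a b != 0) && (c \in qblock q a)]]]
  else B.

Lemma block_imageE a b : g a b != 0 -> block_image (qblock q b) = qblock q a.
Proof.
move=> ab; rewrite /block_image qblock_qBlocks; apply/setP => c; rewrite inE.
apply/existsP/idP => [[a' /existsP[b' /and3P[b'b a'b' ca']]]|ca].
  by rewrite -(eq_qblock (qAut_row_block ab a'b' b'b)).
by exists a; apply/existsP; exists b; rewrite qblock_refl ab.
Qed.

Lemma block_image_qBlocks B : B \in qBlocks q -> block_image B \in qBlocks q.
Proof.
case/qBlocksP=> b ->; have [a ab] := unitmx_col_nz b gU.
by rewrite (block_imageE ab) qblock_qBlocks.
Qed.

Lemma block_image_out B : B \notin qBlocks q -> block_image B = B.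
Proof. by rewrite /block_image => /negbTE->. Qed.

Lemma block_image_inj : injective block_image.
Proof.
have mem_img B : (block_image B \in qBlocks q) = (B \in qBlocks q).
  have [/block_image_qBlocks//|B_out] := boolP (B \in qBlocks q).
  by rewrite block_image_out // (negbTE B_out).
move=> B C eBC; have := mem_img B; rewrite eBC mem_img.
have [hC|C_out] := boolP (C \in qBlocks q) => hB; last first.
  by rewrite -(block_image_out C_out) -eBC block_image_out // -hB.
case/qBlocksP: hC eBC => j ->; move/esym/qBlocksP: hB => [i ->].
have [a ai] := unitmx_col_nz i gU; have [a' a'j] := unitmx_col_nz j gU.
rewrite (block_imageE ai) (block_imageE a'j) => eij.
apply/esym/eq_qblock/(qAut_col_block ai a'j).
by rewrite eij qblock_refl.
Qed.

Lemma card_block_image B : B \in qBlocks q -> #|block_image B| = #|B|.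
Proof.
move=> hB; have [s gs] := unitmx_perm_nz gU.
suff -> : block_image B = [set i | s i \in B] by rewrite card_preimset //; exact: perm_inj.
case/qBlocksP: hB => b ->; apply/setP => i; rewrite inE.
apply/idP/idP => [i_in|sib]; last by rewrite -(eq_qblock sib) (block_imageE (gs i)) qblock_refl.
have := qBlocksE (block_image_qBlocks (qblock_qBlocks b)) i_in.
by rewrite -(block_imageE (gs i)) => /block_image_inj ->; exact: qblock_refl.
Qed.

Definition qAut_perm : {perm {set 'I_n}} := perm block_image_inj.

Lemma qAut_perm_on : perm_on (qBlocks q) qAut_perm.
Proof. by apply/subsetP => B; rewrite inE permE /block_image; case: ifP => // _; rewrite eqxx. Qed.

Lemma qAut_perm_stab : qStab q qAut_perm.
Proof.
apply/qStabP; split=> [|B hB|_ _ /qBlocksP[i ->] /qBlocksP[j ->]]; first exact: qAut_perm_on.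
  by rewrite permE card_block_image.
have [a ai] := unitmx_col_nz i gU; have [d dj] := unitmx_col_nz j gU.
have card_img b c : g c b != 0 -> #|qblock q c| = #|qblock q b|.
  by move=> cb; rewrite -(block_imageE cb) card_block_image ?qblock_qBlocks.
rewrite !permE (block_imageE ai) (block_imageE dj) !qsub_qblock.
by rewrite (card_img _ _ ai) (card_img _ _ dj) (qAut_supp_q ai dj).
Qed.

Lemma qAut_perm_supported : block_supported g qAut_perm.
Proof.
apply/block_supportedP; split=> [|a b ab]; first exact: qAut_perm_on.
by rewrite permE (block_imageE ab) qblock_refl.
Qed.

Lemma qpi_qAut : qpi g = qAut_perm.
Proof. exact: qpi_eq gU qAut_perm_supported. Qed.

Lemma qpi_supported : block_supported g (qpi g).
Proof. by rewrite qpi_qAut; exact: qAut_perm_supported. Qed.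

End QAut.

End Blocks.

Theorem proposition2p6 (k : fieldType) (n : nat) (q : 'M[k]_n) :
  qparam q ->
  exists pi : 'M[k]_n -> {perm {set 'I_n}},
    (* pi maps Aut_gr(S_q(V)) into Stab(q) *)
    (forall g, qAut q g -> qStab q (pi g)) /\
    (* group homomorphism (products = composition of maps) *)
    (forall g h, qAut q g -> qAut q h ->
       forall B, pi (g *m h) B = pi g (pi h B)) /\
    (* surjective onto Stab(q) *)
    (forall s, qStab q s -> exists2 g, qAut q g & pi g = s) /\
    (* kernel = prod_B GL(V_B) *)
    (forall g, qAut q g -> (pi g = 1%g <-> inProdGLblocks q g)) /\
    (* pi o iota = Id *)
    (forall s, qStab q s -> qAut q (qiota q s) /\ pi (qiota q s) = s).
Proof.
move=> qP; exists (qpi q).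
split; [|split; [|split; [|split]]].
- by move=> g gA; rewrite (qpi_qAut qP gA); exact: qAut_perm_stab.
- move=> g h gA hA B; rewrite -permM; congr (fun_of_perm _ B).
  apply: qpi_eq; first by rewrite unitmx_mul (proj1 gA) (proj1 hA).
  exact: block_supported_mul (qpi_supported qP gA) (qpi_supported qP hA).
- by move=> s Ss; exists (qiota q s); [exact: qiota_qAut | exact: qpi_qiota].
- move=> g gA; split=> [g1|/inProdGLblocks_supported1 g1]; last exact: qpi_eq (proj1 gA) g1.
  by apply: block_supported1_inProdGLblocks (proj1 gA) _; rewrite -g1; exact: qpi_supported.
- by move=> s Ss; split; [exact: qiota_qAut | exact: qpi_qiota].
Qed.
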